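(* Let $\mathcal T(W)$ be the directed unweighted graph on $\mathcal V$ having an edge from $i$ to $j$ if and only if $w_{ij}>\tfrac12$. Then $\mathcal V$ is the only non-empty cohesive subset of $\mathcal V$ if and only if the edges of $\mathcal T(W)$ form a single directed cycle that traverses all the nodes of $\mathcal V$.
   Context: Let $n\ge1$, $\mathcal V=\{1,\dots,n\}$, and let $W=(w_{ij})$ be an $n\times n$ row-stochastic matrix (nonnegative entries, each row summing to $1$), viewed as the weighted adjacency matrix of a directed graph on $\mathcal V$. A set $\mathcal M\subseteq\mathcal V$ is cohesive if $\sum_{j\in\mathcal M}w_{ij}\ge\tfrac12$ for every $i\in\mathcal M$. *)

From mathcomp Require Import all_boot all_order all_algebra.
Set Implicit Arguments. Unset Strict Implicit. Unset Printing Implicit Defensive.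
Import Order.TTheory GRing.Theory Num.Theory.
Local Open Scope ring_scope.

(* Nodes V = {1,...,n} are represented by 'I_n. *)

Definition row_stochastic (R : realFieldType) (n : nat) (W : 'M[R]_n) : Prop :=
  (forall i j, 0 <= W i j) /\ (forall i, \sum_(j < n) W i j = 1).

Definition cohesive (R : realFieldType) (n : nat) (W : 'M[R]_n) (M : {set 'I_n}) : Prop :=
  forall i, i \in M -> 2^-1 <= \sum_(j in M) W i j.

Definition Tgraph (R : realFieldType) (n : nat) (W : 'M[R]_n) : rel 'I_n :=
  fun i j => 2^-1 < W i j.

(* The edges of the digraph e form a single directed cycle traversing all
   nodes: there is a listing s of all nodes, each exactly once, such that the
   edges are exactly the pairs (i, successor of i in the cyclic order s). *)
Definition single_hamiltonian_cycle (n : nat) (e : rel 'I_n) : Prop :=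
  exists s : seq 'I_n,
    [/\ uniq s, (forall i, i \in s) & (forall i j, e i j = (j == next s i))].

From mathcomp Require Import all_boot all_order all_algebra.
From mathcomp Require Import lra.
Set Implicit Arguments. Unset Strict Implicit. Unset Printing Implicit Defensive.
Import Order.TTheory GRing.Theory Num.Theory.
Local Open Scope ring_scope.

(* Since rows sum to 1, a node has at most one edge in T(W), and a cohesive
   set cannot lose the edge leaving any of its nodes: edges of T(W) never
   leave a cohesive set. Conversely a set from which every node has an edge
   back into the set is cohesive.
   If V is the only cohesive set, every node k has an incoming edge, for
   otherwise V \ {k} would be cohesive; so T(W) is the graph of a
   permutation f, and the orbit of any node under f is cohesive, hence all of
   V: f is a single cycle. Conversely, along a Hamiltonian cycle every
   non-empty cohesive set reaches every node. *)

Lemma connect_forward_closed (T : finType) (e : rel T) (M : {pred T}) x y :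
  (forall i j, i \in M -> e i j -> j \in M) -> connect e x y -> x \in M -> y \in M.
Proof.
move=> clM /connectP[p e_p ->]; elim: p x e_p => //= z p IHp x /andP[exz e_p] xM.
exact: IHp e_p (clM _ _ xM exz).
Qed.

Lemma single_hamiltonian_cycle_connect (n : nat) (e : rel 'I_n) x y :
  single_hamiltonian_cycle e -> connect e x y.
Proof.
case=> s [s_uniq s_all es].
rewrite (@eq_connect _ e (frel (next s))); last by move=> i j; rewrite es.
by rewrite (fconnect_cycle (cycle_next s_uniq) (s_all x)).
Qed.

Lemma single_hamiltonian_cycle_orbit (n : nat) (e : rel 'I_n) (f : 'I_n -> 'I_n) x :
  injective f -> (forall i j, e i j = (j == f i)) -> (forall y, y \in orbit f x) ->
  single_hamiltonian_cycle e.
Proof.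
move=> f_inj ef orbit_all; exists (orbit f x); split=> // [|i j].
  exact: orbit_uniq.
by rewrite ef; have /eqP <- := next_cycle (cycle_orbit f_inj x) (orbit_all i).
Qed.

Section RowStochastic.

Variables (R : realFieldType) (n : nat) (W : 'M[R]_n).
Hypotheses (W_ge0 : forall i j, 0 <= W i j) (W_row1 : forall i, \sum_(j < n) W i j = 1).

Lemma entry_le_row_sum (M : {set 'I_n}) i j : j \in M -> W i j <= \sum_(k in M) W i k.
Proof. by move=> jM; rewrite (bigD1 j) //= lerDl sumr_ge0. Qed.

Lemma row_sum_add_out_le1 (M : {set 'I_n}) i k :
  k \notin M -> \sum_(j in M) W i j + W i k <= 1.
Proof.
move=> kM; rewrite -(W_row1 i) [leRHS](bigID [in M]) /= lerD2l.
by rewrite (bigD1 k) //= lerDl sumr_ge0.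
Qed.

Lemma row_sum_setC1 i k : \sum_(j in [set~ k]) W i j = 1 - W i k.
Proof.
rewrite -(W_row1 i) [in RHS](bigD1 k) //= addrAC subrr add0r.
by apply: eq_bigl => j; rewrite !inE.
Qed.

Lemma Tgraph_functional i j k : Tgraph W i j -> Tgraph W i k -> j = k.
Proof.
rewrite /Tgraph => hij hik; apply/eqP; apply: contraTT isT => jk.
have := @row_sum_add_out_le1 [set j] i k; rewrite big_set1 inE eq_sym.
by move=> /(_ jk); lra.
Qed.

Lemma cohesive_Tgraph_closed (M : {set 'I_n}) i j :
  cohesive W M -> i \in M -> Tgraph W i j -> j \in M.
Proof.
rewrite /Tgraph => cohM iM hij; apply: contraT => jM.
by have := row_sum_add_out_le1 i jM; have := cohM i iM; lra.
Qed.

Lemma cohesive_of_Tgraph_out (M : {set 'I_n}) :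
  (forall i, i \in M -> exists2 j, j \in M & Tgraph W i j) -> cohesive W M.
Proof.
move=> outM i /outM[j jM hij]; have := entry_le_row_sum i jM.
by rewrite /Tgraph in hij; lra.
Qed.

Lemma cohesive_setC1 k : (forall i, ~~ Tgraph W i k) -> cohesive W [set~ k].
Proof.
move=> no_in i _; have := no_in i; rewrite /Tgraph -leNgt row_sum_setC1; lra.
Qed.

Section OnlyFullCohesive.

Hypothesis only_full : forall M : {set 'I_n}, M != set0 -> cohesive W M -> M = [set: 'I_n].

Lemma Tgraph_in_edge k : exists i, Tgraph W i k.
Proof.
apply/existsP; apply: contraT; rewrite negb_exists => /forallP no_in.
have [C0 | C_ne0] := eqVneq [set~ k] set0.
  have := row_sum_setC1 k k; rewrite C0 big_set0.
  by have := no_in k; rewrite /Tgraph -leNgt; lra.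
have /setP/(_ k) := only_full C_ne0 (cohesive_setC1 no_in).
by rewrite !inE eqxx.
Qed.

Lemma Tgraph_perm :
  exists2 f : 'I_n -> 'I_n, injective f & forall i j, Tgraph W i j = (j == f i).
Proof.
pose g k := xchoose (Tgraph_in_edge k).
have g_edge k : Tgraph W (g k) k := xchooseP (Tgraph_in_edge k).
have g_inj : injective g.
  by move=> k1 k2 eq_g; apply: (@Tgraph_functional (g k1)); rewrite // eq_g.
exists (finv g); first exact: finv_inj.
move=> i j; apply/idP/eqP => [hij | ->].
  by apply: Tgraph_functional hij _; rewrite -{1}(f_finv g_inj i).
by have := g_edge (finv g i); rewrite f_finv.
Qed.

End OnlyFullCohesive.

End RowStochastic.

Theorem proposition1 (R : realFieldType) (n : nat) (W : 'M[R]_n) :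
  (0 < n)%N -> row_stochastic W ->
  ((forall M : {set 'I_n}, M != set0 -> cohesive W M -> M = [set: 'I_n])
   <-> single_hamiltonian_cycle (Tgraph W)).
Proof.
move=> n_gt0 [W_ge0 W_row1]; split=> [only_full | hamW M /set0Pn[x xM] cohM].
  have [f f_inj Tf] := Tgraph_perm W_ge0 W_row1 only_full.
  pose x0 := Ordinal n_gt0; pose O := [set y in orbit f x0].
  have cohO : cohesive W O.
    apply: cohesive_of_Tgraph_out W_ge0 _ _ => i; rewrite inE => iO.
    by exists (f i); rewrite ?inE ?Tf ?mem_orbit.
  have O_full : O = setT.
    by apply: only_full cohO; apply/set0Pn; exists x0; rewrite inE in_orbit.
  apply: (single_hamiltonian_cycle_orbit (x := x0) f_inj Tf) => y.
  by have := in_setT y; rewrite -O_full inE.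
apply/setP => y; rewrite in_setT.
apply: connect_forward_closed (single_hamiltonian_cycle_connect x y hamW) xM.
by move=> i j; apply: cohesive_Tgraph_closed.
Qed.
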